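(* Fix a bandit $k$ and a labeling $L$, and let $H$ be one of the hypotheses RN, RA, RS. Suppose $q^k$ is entrywise nonnegative and transient and that $(q^k,r^k)$ satisfies $H$. Run the Triangularizer on bandit $k$ in accord with $L$. Then every execution of Step 2 is well defined (the current value $q(i,i)$ of the selected state $i$ satisfies $q(i,i)<1$), and after each execution of Step 2 the current data $(\bar q^k,\bar r^k)$, defined by writing the current tableau as $[(I-\bar q^k),\bar r^k]$, satisfy: $\bar q^k$ is entrywise nonnegative and transient, and $(\bar q^k,\bar r^k)$ satisfies the same hypothesis $H$.
   Context: Bandit $k$ has a finite state set $N_k$, real transition rates $q(i,j)$ ($i,j\in N_k$) forming the matrix $q^k$, and real rewards $r(i)$ forming the vector $r^k$. A square matrix is transient if its powers tend to $0$ entrywise. Hypotheses for bandit $k$: (RN) $q^k$ is substochastic, i.e. $\sum_{j\in N_k}q(i,j)\le 1$ for all $i\in N_k$; (RA) $r(i)\le 0$ for all $i\in N_k$; (RS) $r(i)\ge 0$ for all $i\in N_k$. Let $N$ be the union of the state sets of all bandits (pairwise disjoint) and $0\notin N$. A labeling is an injective map $L:N\cup\{0\}\to\{1,\dots,|N|+1\}$ with $L(0)=|N|+1$. Triangularizer for bandit $k$ in accord with $L$: start with the $|N_k|\times(|N_k|+1)$ tableau $T=[(I-q^k),r^k]$ (rows and first $|N_k|$ columns indexed by $N_k$, last column the reward column) and set $M=N_k$. At every stage write the current tableau as $[(I-q),r]$, thereby defining the current data $q(\cdot,\cdot)$, $r(\cdot)$. While $M\ne\emptyset$ do: Step 2: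 let $i\in M$ have the smallest label $L(i)$; set $\alpha=1/[1-q(i,i)]$ (current value); (a) replace row $i$ of the tableau by $\alpha$ times itself; (b) for each $j\in M\setminus\{i\}$, replace row $j$ by itself plus $q(j,i)$ (current value, before this step) times the updated row $i$. Step 3: replace $M$ by $M\setminus\{i\}$. *)

From HB Require Import structures.
From mathcomp Require Import all_boot all_order all_algebra.
Set Implicit Arguments. Unset Strict Implicit. Unset Printing Implicit Defensive.
Import Order.TTheory GRing.Theory Num.Theory.
Local Open Scope ring_scope.

Fixpoint mxpow (R : pzRingType) (n : nat) (A : 'M[R]_n) (m : nat) : 'M[R]_n :=
  if m is m'.+1 then A *m mxpow A m' else 1%:M.

Definition mx_nonneg (R : numDomainType) (n : nat) (A : 'M[R]_n) : Prop :=
  forall i j, 0 <= A i j.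

Definition transient (R : numDomainType) (n : nat) (A : 'M[R]_n) : Prop :=
  forall i j (eps : R), 0 < eps ->
    exists N : nat, forall m : nat, (N <= m)%N -> `|mxpow A m i j| < eps.

Inductive hyp := RN | RA | RS.

Definition sat_hyp (R : numDomainType) (n : nat) (H : hyp)
    (q : 'M[R]_n) (r : 'cV[R]_n) : Prop :=
  match H with
  | RN => forall i, \sum_(j < n) q i j <= 1
  | RA => forall i, r i 0 <= 0
  | RS => forall i, 0 <= r i 0
  end.

(* One execution of Step 2 of the Triangularizer, pivoting on state i, with
   current set M; the tableau is [(I - q), r] stored as the pair (A, b),
   so the current q is 1%:M - A and the current r is b. *)
Definition tri_step (R : fieldType) (n : nat) (M : {set 'I_n}) (i : 'I_n)
    (A : 'M[R]_n) (b : 'cV[R]_n) : 'M[R]_n * 'cV[R]_n :=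
  let q := 1%:M - A in
  let alpha := (1 - q i i)^-1 in
  (\matrix_(k, j) (if k == i then alpha * A i j
                   else if k \in M then A k j + q k i * (alpha * A i j)
                   else A k j),
   \col_k (if k == i then alpha * b i 0
           else if k \in M then b k 0 + q k i * (alpha * b i 0)
           else b k 0)).

Inductive tri_reachable (R : fieldType) (n : nat) (q0 : 'M[R]_n)
    (r0 : 'cV[R]_n) (L : 'I_n -> nat) :
    {set 'I_n} -> 'M[R]_n -> 'cV[R]_n -> Prop :=
| tri_reach0 : tri_reachable q0 r0 L setT (1%:M - q0) r0
| tri_reachS M A b i :
    tri_reachable q0 r0 L M A b -> i \in M ->
    (forall j, j \in M -> (L i <= L j)%N) ->
    tri_reachable q0 r0 L (M :\ i) (tri_step M i A b).1 (tri_step M i A b).2.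

From HB Require Import structures.
From mathcomp Require Import all_boot all_order all_algebra.
From mathcomp Require Import ring lra.
Set Implicit Arguments. Unset Strict Implicit. Unset Printing Implicit Defensive.
Import Order.TTheory GRing.Theory Num.Theory.
Local Open Scope ring_scope.

(* The proof rests on a characterization of transience for an entrywise
   nonnegative matrix Q: Q is transient iff there is a vector x > 0 with
   Q x < x entrywise (a strictly excessive vector).  If Q is transient, some
   power Q^N has all row sums < 1 and x = (I + Q + ... + Q^N) 1 works;
   conversely Q x <= c x with c < 1 gives Q^m x <= c^m x, hence Q^m -> 0.

   Writing the tableau as [(I - q), r] = [A, b], the pivot step on state i
   acts on A and b by the same row operations, which commute with right
   multiplication: step(A) x = step(A x).  We show that, as long as
   q = I - A is nonnegative and A x > 0 for the fixed vector x obtained from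
   the initial data, the pivot A i i is positive, and the step preserves
   nonnegativity of q, positivity of A x, and the sign conditions RA/RS on
   b and RN (i.e. A 1 >= 0).  This invariant holds at every reachable
   configuration, whatever the order of pivots; the theorem follows, using
   A i i > 0 for q i i < 1 and the characterization for transience. *)

Lemma bernoulli_ineq (R : realFieldType) (m : nat) (t : R) : 0 <= t ->
  1 + m%:R * t <= (1 + t) ^+ m.
Proof.
move=> t_ge0; elim: m => [|m IH]; first by rewrite mul0r addr0 expr0.
rewrite exprS mulrS.
have t1_ge0 : 0 <= 1 + t by lra.
have mt_ge0 : 0 <= m%:R * t by rewrite mulr_ge0.
have := ler_wpM2l t1_ge0 IH; nra.
Qed.

Lemma expr_lt_eps (R : archiRealFieldType) (c eps : R) :
  0 <= c -> c < 1 -> 0 < eps -> exists N : nat, c ^+ N < eps.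
Proof.
move=> c_ge0 c_lt1 eps_gt0.
have [->|c_neq0] := eqVneq c 0; first by exists 1%N; rewrite expr1.
have c_gt0 : 0 < c by rewrite lt0r c_neq0.
pose t := c^-1 - 1.
have t_gt0 : 0 < t by rewrite subr_gt0 invf_gt1.
have ct : c * (1 + t) = 1 by rewrite /t addrC subrK mulfV.
have [N bound] : exists N : nat, eps^-1 < N%:R * t.
  exists (Num.bound (eps^-1 / t)).
  by rewrite -ltr_pdivrMr // archi_boundP // divr_ge0 // ltW ?invr_gt0.
exists N.
have big : 1 < eps * (1 + t) ^+ N.
  rewrite -[X in X < _](mulfV (lt0r_neq0 eps_gt0)) ltr_pM2l //.
  have := bernoulli_ineq N (ltW t_gt0); lra.
have cN : c ^+ N * (1 + t) ^+ N = 1 by rewrite -exprMn ct expr1n.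
have : 0 < c ^+ N * (eps * (1 + t) ^+ N - 1)
  by rewrite mulr_gt0 ?exprn_gt0 // subr_gt0.
nra.
Qed.

Lemma finite_uniform_bound (T : finType) (P : T -> nat -> Prop) :
  (forall t, exists N, forall m, (N <= m)%N -> P t m) ->
  exists N, forall t m, (N <= m)%N -> P t m.
Proof.
case/fin_all_exists=> N HN; exists (\max_t N t)%N => t m le_m.
by apply: HN; apply: leq_trans le_m; apply: leq_bigmax.
Qed.

Section MatrixBasics.
Variable R : numDomainType.
Variable n : nat.
Implicit Types (Q A : 'M[R]_n) (x y : 'cV[R]_n).

Definition ones : 'cV[R]_n := const_mx 1.

Lemma mulmx_ones (A : 'M[R]_n) k : (A *m ones) k 0 = \sum_j A k j.
Proof. by rewrite mxE; apply: eq_bigr => j _; rewrite mxE mulr1. Qed.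

Lemma mulmx_nonneg Q y : mx_nonneg Q -> (forall k, 0 <= y k 0) ->
  forall k, 0 <= (Q *m y) k 0.
Proof.
by move=> Qn y_ge0 k; rewrite mxE sumr_ge0 // => j _; rewrite mulr_ge0.
Qed.

Lemma mxpow_nonneg Q m : mx_nonneg Q -> mx_nonneg (mxpow Q m).
Proof.
move=> Qn; elim: m => [|m IH] i j /=; first by rewrite mxE ler0n.
by rewrite mxE sumr_ge0 // => l _; rewrite mulr_ge0.
Qed.

Lemma subI_entry A k j : (1%:M - A) k j = (k == j)%:R - A k j.
Proof. by rewrite !mxE. Qed.

Lemma mulmx_subI A x k : ((1%:M - A) *m x) k 0 = x k 0 - (A *m x) k 0.
Proof. by rewrite mulmxBl mul1mx !mxE. Qed.

Lemma offdiag_nonpos A :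
  mx_nonneg (1%:M - A) -> forall k j, k != j -> A k j <= 0.
Proof.
move=> An k j kj; have := An k j.
by rewrite subI_entry (negbTE kj) sub0r oppr_ge0.
Qed.

Definition strictly_excessive Q x : Prop :=
  (forall k, 0 < x k 0) /\ (forall k, (Q *m x) k 0 < x k 0).

Lemma mxpow_geometric Q m :
  \sum_(k < m) mxpow Q k + mxpow Q m = 1%:M + Q *m \sum_(k < m) mxpow Q k.
Proof.
elim: m => [|m IH]; first by rewrite !big_ord0 add0r mulmx0 addr0.
by rewrite big_ord_recr /= mulmxDr addrA -IH.
Qed.

End MatrixBasics.
Arguments ones {R n}.

Section Transience.
Variable R : realFieldType.
Variable n : nat.
Implicit Types (Q : 'M[R]_n) (x : 'cV[R]_n).

Lemma transient_rowsum_lt1 Q : mx_nonneg Q -> transient Q ->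
  exists N, forall m, (N <= m)%N -> forall k, \sum_j mxpow Q m k j < 1.
Proof.
move=> Qn Qt; pose eps : R := (n.+1%:R)^-1.
have eps_gt0 : 0 < eps by rewrite invr_gt0 ltr0n.
have [N HN] := @finite_uniform_bound _
  (fun (t : 'I_n * 'I_n) m => `|mxpow Q m t.1 t.2| < eps)
  (fun t => Qt t.1 t.2 eps eps_gt0).
exists N => m le_m k; apply: (@le_lt_trans _ _ (n%:R * eps)).
  rewrite -[n in n%:R]card_ord mulr_natl -sumr_const; apply: ler_sum => j _.
  by have := HN (k, j) m le_m; rewrite ger0_norm ?mxpow_nonneg // => /ltW.
by rewrite ltr_pdivrMr ?ltr0n // mul1r ltr_nat.
Qed.

Lemma transient_excessive Q : mx_nonneg Q -> transient Q ->
  exists x, strictly_excessive Q x.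
Proof.
move=> Qn Qt; have [N HN] := transient_rowsum_lt1 Qn Qt.
pose S := \sum_(k < N.+1) mxpow Q k.
have QSE : Q *m (S *m ones) = S *m ones + mxpow Q N.+1 *m ones - ones.
  have QS : Q *m S = S + mxpow Q N.+1 - 1%:M.
    by apply/eqP; rewrite eq_sym subr_eq mxpow_geometric addrC.
  by rewrite mulmxA QS mulmxBl !mulmxDl mul1mx.
exists (S *m ones); split=> k.
- rewrite /S mulmx_suml summxE big_ord_recl /= mul1mx mxE.
  apply: lt_le_trans ltr01 _; rewrite lerDl sumr_ge0 // => j _.
  apply: mulmx_nonneg; first exact: (mxpow_nonneg (bump 0 j) Qn).
  by move=> l; rewrite mxE.
- have := HN N.+1 (leqW (leqnn N)) k; rewrite -mulmx_ones QSE.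
  move: (S *m ones) (mxpow Q N.+1 *m ones) => u v; rewrite !mxE; lra.
Qed.

Lemma excessive_contraction Q x : strictly_excessive Q x ->
  exists2 c : R, 0 <= c < 1 & forall k, (Q *m x) k 0 <= c * x k 0.
Proof.
case=> x_gt0 Qx_lt; exists (\big[Order.max/0]_k ((Q *m x) k 0 / x k 0)).
  rewrite bigmax_ge_id /=; apply: bigmax_lt => [|k _]; first exact: ltr01.
  by rewrite ltr_pdivrMr // mul1r.
by move=> k; rewrite -ler_pdivrMr //; apply: le_bigmax.
Qed.

Lemma mxpow_contraction Q x (c : R) : mx_nonneg Q -> 0 <= c ->
  (forall k, (Q *m x) k 0 <= c * x k 0) ->
  forall m k, (mxpow Q m *m x) k 0 <= c ^+ m * x k 0.
Proof.
move=> Qn c_ge0 Qx_le; elim=> [|m IH] k; first by rewrite mul1mx expr0 mul1r.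
rewrite -mulmxA [X in X <= _]mxE exprSr -mulrA.
apply: (@le_trans _ _ (\sum_l Q k l * (c ^+ m * x l 0))).
  by apply: ler_sum => l _; apply: ler_wpM2l.
under eq_bigr do rewrite mulrCA.
by rewrite -mulr_sumr ler_wpM2l ?exprn_ge0 //; have := Qx_le k; rewrite mxE.
Qed.

End Transience.

Lemma excessive_transient (R : archiRealFieldType) n (Q : 'M[R]_n)
    (x : 'cV[R]_n) :
  mx_nonneg Q -> strictly_excessive Q x -> transient Q.
Proof.
move=> Qn xe i j eps eps_gt0; have [x_gt0 _] := xe.
have [c /andP[c_ge0 c_lt1] Qx_le] := excessive_contraction xe.
have entry m : mxpow Q m i j * x j 0 <= c ^+ m * x i 0.
  apply: le_trans (mxpow_contraction Qn c_ge0 Qx_le m i).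
  rewrite [X in _ <= X]mxE (bigD1 j) //= lerDl sumr_ge0 // => l _.
  by rewrite mulr_ge0 ?mxpow_nonneg // ltW.
have [N cN] := expr_lt_eps c_ge0 c_lt1
  (divr_gt0 (mulr_gt0 eps_gt0 (x_gt0 j)) (x_gt0 i)).
exists N => m le_m; rewrite ger0_norm ?mxpow_nonneg //.
rewrite -(ltr_pM2r (x_gt0 j)); apply: le_lt_trans (entry m) _.
apply: (@le_lt_trans _ _ (c ^+ N * x i 0)).
  by rewrite ler_wpM2r ?ler_wiXn2l // ltW.
by rewrite -ltr_pdivlMr.
Qed.

Section Pivot.
Variable R : realFieldType.
Variable n : nat.
Implicit Types (A : 'M[R]_n) (b x : 'cV[R]_n) (M : {set 'I_n}) (i k j : 'I_n).

(* The multiplier -A k i / A i i of the pivot row added to row k. *)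
Lemma pivot_coef_ge0 A i k : mx_nonneg (1%:M - A) -> 0 < A i i -> k != i ->
  0 <= - A k i / A i i.
Proof.
by move=> An Aii ki; rewrite divr_ge0 ?oppr_ge0 ?offdiag_nonpos // ltW.
Qed.

(* Explicit entries of the updated reward column and of the updated matrix;
   note that 1 - q i i = A i i. *)
Lemma step_col M i A b k : (tri_step M i A b).2 k 0 =
  if k == i then b i 0 / A i i
  else if k \in M then b k 0 + (- A k i / A i i) * b i 0 else b k 0.
Proof.
rewrite mxE subI_entry eqxx subKr.
case: eqVneq => [_|ki] /=; first exact: mulrC.
by rewrite subI_entry (negbTE ki) sub0r mulrA.
Qed.

Lemma step_mat M i A b k j : (tri_step M i A b).1 k j =
  if k == i then A i j / A i i
  else if k \in M then A k j + (- A k i / A i i) * A i j else A k j.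
Proof.
rewrite mxE subI_entry eqxx subKr.
case: eqVneq => [_|ki] /=; first exact: mulrC.
by rewrite subI_entry (negbTE ki) sub0r mulrA.
Qed.

(* Row operations commute with right multiplication by a vector. *)
Lemma step_mul M i A b x :
  (tri_step M i A b).1 *m x = (tri_step M i A (A *m x)).2.
Proof.
apply/matrixP => k z; rewrite (ord1 z) step_col mxE.
under eq_bigr do rewrite step_mat.
case: eqVneq => [_|ki] /=.
  by rewrite mxE mulr_suml; apply: eq_bigr => j _; rewrite mulrAC.
case: (k \in M); last by rewrite mxE.
under eq_bigr do rewrite mulrDl.
rewrite big_split !mxE mulr_sumr; congr (_ + _).
by apply: eq_bigr => j _; rewrite mulrA.
Qed.

Section PositivePivot.
Variables (M : {set 'I_n}) (i : 'I_n) (A : 'M[R]_n).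
Hypotheses (An : mx_nonneg (1%:M - A)) (Aii : 0 < A i i).

Lemma step_col_ge0 b : (forall k, 0 <= b k 0) ->
  forall k, 0 <= (tri_step M i A b).2 k 0.
Proof.
move=> b_ge0 k; rewrite step_col; case: eqVneq => [_|ki].
  by rewrite divr_ge0 // ltW.
case: ifP => _; last exact: b_ge0.
by rewrite addr_ge0 // mulr_ge0 // pivot_coef_ge0.
Qed.

Lemma step_col_gt0 b : (forall k, 0 < b k 0) ->
  forall k, 0 < (tri_step M i A b).2 k 0.
Proof.
move=> b_gt0 k; rewrite step_col; case: eqVneq => [_|ki]; first exact: divr_gt0.
case: ifP => _; last exact: b_gt0.
by rewrite ltr_wpDr // mulr_ge0 ?pivot_coef_ge0 // ltW.
Qed.

Lemma step_col_le0 b : (forall k, b k 0 <= 0) ->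
  forall k, (tri_step M i A b).2 k 0 <= 0.
Proof.
move=> b_le0 k; rewrite step_col; case: eqVneq => [_|ki].
  by rewrite mulr_le0_ge0 // invr_ge0 ltW.
case: ifP => _; last exact: b_le0.
by rewrite ler_wnDr // mulr_ge0_le0 // pivot_coef_ge0.
Qed.

Lemma step_nonneg b : mx_nonneg (1%:M - (tri_step M i A b).1).
Proof.
move=> k j; rewrite subI_entry step_mat.
have Aii_neq0 : A i i != 0 by rewrite gt_eqF.
case: (eqVneq k i) => [->|ki].
  case: (eqVneq j i) => [->|ji]; first by rewrite ?eqxx divff // subrr.
  by rewrite sub0r -mulNr divr_ge0 ?oppr_ge0 ?offdiag_nonpos 1?eq_sym // ltW.
case: (k \in M); last by rewrite -subI_entry.
case: (eqVneq j i) => [->|ji].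
  by rewrite (negbTE ki) divfK // addrN subrr.
have := An k j; rewrite subI_entry => Akj.
rewrite opprD addrA addr_ge0 // -mulrN mulr_ge0 ?pivot_coef_ge0 //.
by rewrite oppr_ge0 offdiag_nonpos // eq_sym.
Qed.
End PositivePivot.

(* If q = I - A is nonnegative and A x > 0 for some x > 0, every pivot is
   positive: the off-diagonal part of row i only decreases (A x) i. *)
Lemma diag_pos A x i : mx_nonneg (1%:M - A) -> (forall k, 0 < x k 0) ->
  0 < (A *m x) i 0 -> 0 < A i i.
Proof.
move=> An x_gt0; rewrite mxE (bigD1 i) //= => Ax_gt0.
have rest_le0 : \sum_(j | j != i) A i j * x j 0 <= 0.
  apply: sumr_le0 => j ji.
  by rewrite mulr_le0_ge0 ?offdiag_nonpos 1?eq_sym // ltW.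
rewrite -(pmulr_lgt0 _ (x_gt0 i)).
by apply: lt_le_trans Ax_gt0 _; rewrite gerDl.
Qed.
End Pivot.

Section Invariant.
Variable R : realFieldType.
Variable n : nat.
Implicit Types (A : 'M[R]_n) (b x : 'cV[R]_n).

Definition tableau_invariant x H A b : Prop :=
  [/\ mx_nonneg (1%:M - A), forall k, 0 < (A *m x) k 0
    & sat_hyp H (1%:M - A) b].

Lemma sat_RN_ones A b :
  sat_hyp RN (1%:M - A) b <-> forall k, 0 <= (A *m ones) k 0.
Proof.
have rowsum k : \sum_j (1%:M - A) k j = 1 - (A *m ones) k 0.
  by rewrite -mulmx_ones mulmx_subI mxE.
by split=> h k; rewrite ?rowsum; have := h k; rewrite ?rowsum; lra.
Qed.

Lemma invariant_step x H M i A b : (forall k, 0 < x k 0) ->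
  tableau_invariant x H A b ->
  tableau_invariant x H (tri_step M i A b).1 (tri_step M i A b).2.
Proof.
move=> x_gt0 [An Ax_gt0 hH]; have Aii := diag_pos An x_gt0 (Ax_gt0 i).
split; first exact: step_nonneg.
  by rewrite step_mul; apply: step_col_gt0.
case: H hH => [/sat_RN_ones Aones_ge0 | | ]; last 2 first.
- exact: step_col_le0.
- exact: step_col_ge0.
by apply/sat_RN_ones => k; rewrite step_mul; apply: step_col_ge0.
Qed.

Lemma invariant_reachable q r L x H : mx_nonneg q -> strictly_excessive q x ->
  sat_hyp H q r -> forall M A b, tri_reachable q r L M A b ->
  tableau_invariant x H A b.
Proof.
move=> qn [x_gt0 qx_lt] hq M A b; elim=> [|{}M {}A {}b i _ IH _ _].
  split; rewrite ?subKr // => k.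
  by rewrite mulmx_subI subr_gt0; apply: qx_lt.
exact: invariant_step.
Qed.
End Invariant.

Theorem proposition3p1 (R : archiRealFieldType) (n : nat)
    (q : 'M[R]_n) (r : 'cV[R]_n) (L : 'I_n -> nat) (L_inj : injective L)
    (H : hyp) :
  mx_nonneg q -> transient q -> sat_hyp H q r ->
  forall (M : {set 'I_n}) (A : 'M[R]_n) (b : 'cV[R]_n),
    tri_reachable q r L M A b ->
    (forall i, i \in M -> (forall j, j \in M -> (L i <= L j)%N) ->
       (1%:M - A) i i < 1) /\
    mx_nonneg (1%:M - A) /\ transient (1%:M - A) /\ sat_hyp H (1%:M - A) b.
Proof.
move=> qn qt hq M A b reach.
have [x xe] := transient_excessive qn qt; have [x_gt0 _] := xe.
have [An Ax_gt0 hH] := invariant_reachable qn xe hq reach.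
split.
  move=> i _ _; rewrite subI_entry eqxx mulr1n gtrDl oppr_lt0.
  exact: diag_pos An x_gt0 (Ax_gt0 i).
split=> //; split=> //.
apply: (excessive_transient An (x := x)); split=> // k.
by rewrite mulmx_subI; have := Ax_gt0 k; lra.
Qed.
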